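(* Let $$B= \begin{pmatrix} 1& 2& 2\\ 2&1& 2\\ 2&2& 3 \end{pmatrix}.$$ For every positive integer $n$, writing $B^n(3,4,5)^\top=(x,y,z)^\top$, the inradius $r_n$ of the triangle with side lengths $x,y,z$ is $$r_n=\frac{(3+2\sqrt{2})^{n+1}-(3-2\sqrt{2})^{n+1}}{4\sqrt{2}}.$$
   Context: Triples are regarded as row vectors and $\top$ denotes transpose. The triple $B^n(3,4,5)^\top$ is a primitive Pythagorean triple (positive integers $x,y,z$ with $x^2+y^2=z^2$), so the triangle is a right triangle with hypotenuse $z$. *)

From HB Require Import structures.
From mathcomp Require Import all_boot all_order all_algebra.
Set Implicit Arguments. Unset Strict Implicit. Unset Printing Implicit Defensive.
Import Order.TTheory GRing.Theory Num.Theory.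
Local Open Scope ring_scope.

Definition Bmat : 'M[int]_3 :=
  \matrix_(i < 3, j < 3)
    (if (i == 2%N :> nat) && (j == 2%N :> nat) then 3
     else if i == j then 1 else 2).

Definition v345 : 'cV[int]_3 :=
  \col_(i < 3) (if i == 0%N :> nat then 3 else if i == 1%N :> nat then 4 else 5).

Definition triple (n : nat) : 'cV[int]_3 := (Bmat ^+ n) *m v345.

Definition semiperimeter (R : rcfType) (a b c : R) : R := (a + b + c) / 2.
Definition heron_area (R : rcfType) (a b c : R) : R :=
  let s := semiperimeter a b c in Num.sqrt (s * (s - a) * (s - b) * (s - c)).
Definition inradius (R : rcfType) (a b c : R) : R :=
  heron_area a b c / semiperimeter a b c.

From HB Require Import structures.
From mathcomp Require Import all_boot all_order all_algebra.
From mathcomp Require Import ring zify.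
Import Order.TTheory GRing.Theory Num.Theory.
Local Open Scope ring_scope.

(* The matrix [B] preserves the Lorentz form [x^2 + y^2 - z^2] and positivity,
   so every [B^n (3,4,5)^T] is a Pythagorean triple [(x, y, z)] with positive
   entries, and the inradius of that right triangle is [(x + y - z) / 2].
   The quantities [d_n = x + y - z] and [s_n = x + y + z] satisfy
   [d_(n+1) = s_n] and [s_(n+1) = 6 s_n - d_n], so [d_n] obeys
   [d_(n+2) = 6 d_(n+1) - d_n] with [d_0 = 2], [d_1 = 12]: [d_n / 2] is the
   Lucas sequence [U_(n+1)] of the polynomial [X^2 - 6 X + 1], whose roots are
   [3 +- 2 sqrt 2]. *)

Lemma heron_right (R : rcfType) (a b c : R) : a ^+ 2 + b ^+ 2 = c ^+ 2 ->
  let s := semiperimeter a b c in s * (s - a) * (s - b) * (s - c) = (a * b / 2) ^+ 2.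
Proof.
move=> habc /=; rewrite /semiperimeter.
have hq : a ^+ 2 + b ^+ 2 - c ^+ 2 = 0 by rewrite habc subrr.
transitivity ((a * b / 2) ^+ 2 - (a ^+ 2 + b ^+ 2 - c ^+ 2) ^+ 2 / 16); first by field.
by rewrite hq expr0n mul0r subr0.
Qed.

Lemma inradius_right (R : rcfType) (a b c : R) : 0 < a -> 0 < b -> 0 < c ->
  a ^+ 2 + b ^+ 2 = c ^+ 2 -> inradius a b c = (a + b - c) / 2.
Proof.
move=> ha hb hc habc; rewrite /inradius /heron_area heron_right //.
rewrite sqrtr_sqr ger0_norm; last by rewrite divr_ge0 // mulr_ge0 // ltW.
have hs : a + b + c != 0 by rewrite gt_eqF // !addr_gt0.
rewrite /semiperimeter.
transitivity ((a + b - c) / 2 - (a ^+ 2 + b ^+ 2 - c ^+ 2) / (2 * (a + b + c))).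
  by field.
by rewrite habc subrr mul0r subr0.
Qed.

Definition lucasU {R : fieldType} (a b : R) (k : nat) : R :=
  (a ^+ k - b ^+ k) / (a - b).

Section LucasSequence.
Variables (R : fieldType) (a b : R).

Lemma lucasU1 : a != b -> lucasU a b 1 = 1.
Proof. by move=> hab; rewrite /lucasU !expr1 divff // subr_eq0. Qed.

Lemma lucasU2 : a != b -> lucasU a b 2 = a + b.
Proof.
move=> hab; have hd : a - b != 0 by rewrite subr_eq0.
by rewrite /lucasU; field.
Qed.

Lemma lucasUSS k :
  lucasU a b k.+2 = (a + b) * lucasU a b k.+1 - a * b * lucasU a b k.
Proof. by rewrite /lucasU !exprS; ring. Qed.

End LucasSequence.

Local Notation tx n := (triple n 0 0).
Local Notation ty n := (triple n 1 0).
Local Notation tz n := (triple n 2 0).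

Lemma Bmat_mulmx_coords (t : 'cV[int]_3) :
  [/\ (Bmat *m t) 0 0 = t 0 0 + 2 * t 1 0 + 2 * t 2 0,
      (Bmat *m t) 1 0 = 2 * t 0 0 + t 1 0 + 2 * t 2 0 &
      (Bmat *m t) 2 0 = 2 * t 0 0 + 2 * t 1 0 + 3 * t 2 0].
Proof.
rewrite !mxE !big_ord_recl !big_ord0 !mxE /=.
have -> : (ord0 : 'I_3) = 0 by apply/val_inj.
have -> : (lift ord0 ord0 : 'I_3) = 1 by apply/val_inj.
have -> : (lift ord0 (lift ord0 ord0) : 'I_3) = 2 by apply/val_inj.
by split; ring.
Qed.

Lemma triple0 : [/\ tx 0 = 3, ty 0 = 4 & tz 0 = 5].
Proof. by rewrite /triple expr0 mul1mx !mxE. Qed.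

Lemma tripleSE n : triple n.+1 = Bmat *m triple n.
Proof. by rewrite /triple exprS mulmxA. Qed.

Lemma tripleS n :
  [/\ tx n.+1 = tx n + 2 * ty n + 2 * tz n,
      ty n.+1 = 2 * tx n + ty n + 2 * tz n &
      tz n.+1 = 2 * tx n + 2 * ty n + 3 * tz n].
Proof. by rewrite tripleSE; apply: Bmat_mulmx_coords. Qed.

Lemma triple_gt0 n : [/\ 0 < tx n, 0 < ty n & 0 < tz n].
Proof.
elim: n => [|n [hx hy hz]]; first by case: triple0 => -> -> ->.
by case: (tripleS n) => -> -> ->; split; lia.
Qed.

Definition lorentz_form (t : 'cV[int]_3) : int :=
  t 0 0 ^+ 2 + t 1 0 ^+ 2 - t 2 0 ^+ 2.

Lemma lorentz_form_Bmat t : lorentz_form (Bmat *m t) = lorentz_form t.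
Proof. by rewrite /lorentz_form; case: (Bmat_mulmx_coords t) => -> -> ->; ring. Qed.

Lemma triple_pythagorean n : tx n ^+ 2 + ty n ^+ 2 = tz n ^+ 2.
Proof.
apply/eqP; rewrite -subr_eq0; apply/eqP; rewrite -/(lorentz_form (triple n)).
elim: n => [|n IH]; first by rewrite /lorentz_form; case: triple0 => -> -> ->.
by rewrite tripleSE lorentz_form_Bmat.
Qed.

Definition legs_minus_hyp (n : nat) : int := tx n + ty n - tz n.

Lemma legs_minus_hyp0 : legs_minus_hyp 0 = 2.
Proof. by rewrite /legs_minus_hyp; case: triple0 => -> -> ->. Qed.

Lemma legs_minus_hyp1 : legs_minus_hyp 1 = 12.
Proof.
by rewrite /legs_minus_hyp; case: (tripleS 0) => -> -> ->; case: triple0 => -> -> ->.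
Qed.

Lemma legs_minus_hypSS n :
  legs_minus_hyp n.+2 = 6 * legs_minus_hyp n.+1 - legs_minus_hyp n.
Proof.
rewrite /legs_minus_hyp.
case: (tripleS n.+1) => -> -> ->; case: (tripleS n) => -> -> ->; ring.
Qed.

Lemma legs_minus_hyp_lucasU (R : fieldType) (a b : R) :
  a + b = 6 -> a * b = 1 -> a != b ->
  forall n, (legs_minus_hyp n)%:~R = 2 * lucasU a b n.+1.
Proof.
move=> hsum hprod hab.
suff two_steps n : (legs_minus_hyp n)%:~R = 2 * lucasU a b n.+1 /\
                   (legs_minus_hyp n.+1)%:~R = 2 * lucasU a b n.+2.
  by move=> n; case: (two_steps n).
elim: n => [|n [IH IH1]].
  rewrite legs_minus_hyp0 legs_minus_hyp1 lucasU1 // lucasU2 // hsum mulr1.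
  by split=> //; rewrite -natrM.
split=> //.
by rewrite legs_minus_hypSS lucasUSS hsum hprod intrD intrN rmorphM /= IH IH1; ring.
Qed.

Theorem mainTheorem4 (R : rcfType) (n : nat) : (0 < n)%N ->
  inradius ((triple n 0 0)%:~R : R) ((triple n 1 0)%:~R) ((triple n 2 0)%:~R)
  = ((3 + 2 * Num.sqrt 2) ^+ n.+1 - (3 - 2 * Num.sqrt 2) ^+ n.+1)
    / (4 * Num.sqrt 2).
Proof.
(* The formula holds for [n = 0] as well. *)
move=> _; set s := Num.sqrt 2 : R.
have s_sqr : s ^+ 2 = 2 by rewrite sqr_sqrtr // ler0n.
have s_neq0 : s != 0 by rewrite gt_eqF // sqrtr_gt0 ltr0n.
have [hx hy hz] := triple_gt0 n.
rewrite inradius_right ?ltr0z //; last by rewrite -!rmorphXn -!intrD triple_pythagorean.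
have -> : (tx n)%:~R + (ty n)%:~R - (tz n)%:~R = (legs_minus_hyp n)%:~R :> R.
  by rewrite /legs_minus_hyp intrB intrD.
rewrite (@legs_minus_hyp_lucasU _ (3 + 2 * s) (3 - 2 * s)).
- rewrite /lucasU (_ : 3 + 2 * s - (3 - 2 * s) = 4 * s); last by ring.
  by field.
- by ring.
- transitivity (9 - 4 * s ^+ 2); first by ring.
  by rewrite s_sqr; ring.
- rewrite -subr_eq0 (_ : _ - _ = 4 * s); last by ring.
  by rewrite mulf_neq0 ?pnatr_eq0.
Qed.
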